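(* For $n\ge 0$, let $CP_n$ be the clawed path with respect to a path of length $n$. Then $M_2(CP_n)\simeq S^{2n+1}$.
   Context: A path of length $n$ has $n$ edges and $n+1$ vertices (for $n=0$ it is a single vertex). For a graph $G$ of maximum degree at most $3$, the clawed graph $CG$ is obtained by subdividing every edge of $G$ (replacing $\{u,v\}$ by a new vertex $w$ and edges $\{u,w\},\{w,v\}$) and then attaching new leaves to every original vertex so that every original vertex has degree exactly $3$; $CP_n$ is the clawed graph of the path of length $n$ (so $CP_0=K_{1,3}$). $M_2(G)$ is the simplicial complex whose vertices are the edges of $G$ and whose faces are the $2$-matchings of $G$ (edge sets in which every vertex has degree at most $2$). *)

From HB Require Import structures.
From mathcomp Require Import all_boot all_order all_algebra.
From mathcomp Require Import reals.
Set Implicit Arguments. Unset Strict Implicit. Unset Printing Implicit Defensive.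
Import Order.TTheory GRing.Theory Num.Theory.
Local Open Scope ring_scope.

Definition edges (T : finType) (adj : rel T) : {set {set T}} :=
  [set e : {set T} | [exists x, exists y, adj x y && (e == [set x; y])]].

Definition deg (T : finType) (adj : rel T) (v : T) : nat := #|[set w | adj v w]|.

Definition path_adj (n : nat) : rel 'I_n.+1 :=
  fun i j => ((i : nat).+1 == j) || ((j : nat).+1 == i).

(* Clawed graph CG of a graph G of maximum degree <= 3.
   Vertex type: original vertices, subdivision vertices (one for each
   edge e of G, indexed by e itself), and leaves (v, i) attached to the
   original vertex v for i < 3 - deg v.  Elements of the ambient type that
   are not vertices of CG (Sub e with e not an edge, Leaf (v,i) with
   i >= 3 - deg v) are isolated and play no role for the edge set. *)
Definition cg_vertex (T : finType) : finType :=
  (T + {set T} + (T * 'I_3))%type.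

Definition clawed_adj (T : finType) (adj : rel T) : rel (cg_vertex T) :=
  fun x y =>
    match x, y with
    | inl (inl u), inl (inr e) => (u \in e) && (e \in edges adj)
    | inl (inr e), inl (inl u) => (u \in e) && (e \in edges adj)
    | inl (inl u), inr (v, i) => (u == v) && ((i : nat) < 3 - deg adj v)%N
    | inr (v, i), inl (inl u) => (u == v) && ((i : nat) < 3 - deg adj v)%N
    | _, _ => false
    end.

Definition CP_adj (n : nat) : rel (cg_vertex 'I_n.+1) := clawed_adj (@path_adj n).

Definition two_matching (T : finType) (adj : rel T) (F : {set {set T}}) : bool :=
  (F \subset edges adj) && [forall v : T, #|[set e in F | v \in e]| <= 2]%N.

Definition M2 (T : finType) (adj : rel T) : {set {set T}} -> bool :=
  two_matching adj.

Section Topo.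
Variable R : realType.

Definition vdist (I : finType) (x y : I -> R) : R := \sum_(i : I) `|x i - y i|.

Definition maps_into (I J : finType) (A : (I -> R) -> Prop) (B : (J -> R) -> Prop)
  (f : (I -> R) -> (J -> R)) : Prop := forall x, A x -> B (f x).

Definition cont_on (I J : finType) (A : (I -> R) -> Prop) (f : (I -> R) -> (J -> R)) : Prop :=
  forall x, A x -> forall e : R, 0 < e -> exists2 d : R, 0 < d &
    forall y, A y -> vdist x y < d -> vdist (f x) (f y) < e.

Definition homotopic (I J : finType) (A : (I -> R) -> Prop) (B : (J -> R) -> Prop)
  (f g : (I -> R) -> (J -> R)) : Prop :=
  exists H : R -> (I -> R) -> (J -> R),
    [/\ (forall t x, 0 <= t <= 1 -> A x -> B (H t x)),
        (forall t x, 0 <= t <= 1 -> A x -> forall e : R, 0 < e ->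
           exists2 d : R, 0 < d & forall s y, 0 <= s <= 1 -> A y ->
             `|t - s| < d -> vdist x y < d -> vdist (H t x) (H s y) < e),
        (forall x, A x -> H 0 x = f x) &
        (forall x, A x -> H 1 x = g x)].

Definition homotopy_equiv (I J : finType) (A : (I -> R) -> Prop) (B : (J -> R) -> Prop) : Prop :=
  exists (f : (I -> R) -> (J -> R)) (g : (J -> R) -> (I -> R)),
    [/\ cont_on A f /\ maps_into A B f,
        cont_on B g /\ maps_into B A g,
        homotopic A A (g \o f) id &
        homotopic B B (f \o g) id].

Definition realization (V : finType) (face : {set V} -> bool) : (V -> R) -> Prop :=
  fun x => [/\ forall v, 0 <= x v, \sum_(v : V) x v = 1 & face [set v | x v != 0]].

Definition sphere (m : nat) : ('I_m.+1 -> R) -> Prop :=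
  fun y => \sum_(i < m.+1) y i ^+ 2 = 1.

End Topo.

From mathcomp Require Import all_boot all_order all_algebra.
From mathcomp Require Import reals.
From mathcomp Require Import ring lra zify.
Set Implicit Arguments. Unset Strict Implicit. Unset Printing Implicit Defensive.
Import Order.TTheory GRing.Theory Num.Theory.

(* Every edge of a clawed graph CG contains exactly one original vertex, and
   each original vertex v lies on exactly three edges, its claw; all other
   vertices have degree at most 2.  Hence a set of edges is a 2-matching iff it
   contains no whole claw, so M_2(CG) is the join over the vertices of G of the
   boundaries of triangles: a join of |V(G)| circles, i.e. S^(2|V(G)|-1).
   Explicitly, index the claw of v by [option bool], with [None] as base edge.
   A point t of the realization goes to the normalisation of the vector of the
   differences t(Some k) - t(None) over all claws; back, a pair (a_0, a_1) is
   sent to the triangle coordinates (a_0, a_1, 0) - min(a_0, a_1, 0), which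
   have a zero entry, and everything is rescaled to total mass 1.  These maps
   are continuous and mutually inverse. *)

Lemma card_ord_lt (n k : nat) : k <= n -> #|[set i : 'I_n | i < k]| = k.
Proof.
move=> kn; have widen_inj : injective (widen_ord kn).
  by move=> i j [] /val_inj.
rewrite -[RHS]card_ord -(card_imset _ widen_inj).
apply: eq_card => i; rewrite inE; apply/idP/imsetP => [ik|[j _ ->]].
  by exists (Ordinal ik) => //; apply: val_inj.
exact: ltn_ord j.
Qed.

Section EdgesAt.
Variables (T : finType) (adj : rel T).
Hypothesis adj_sym : symmetric adj.

Lemma edges_at x :
  [set e in edges adj | x \in e] = [set [set x; y] | y in [set y | adj x y]].
Proof.
apply/setP => e; rewrite inE; apply/andP/imsetP => [[]|[y]].
  rewrite inE => /existsP[a /existsP[b /andP[ab /eqP ->]]].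
  rewrite !inE => /orP[]/eqP ->; first by exists b; rewrite ?inE.
  by exists a; rewrite ?inE 1?adj_sym // setUC.
rewrite inE => xy ->; split; last by rewrite !inE eqxx.
by rewrite inE; apply/existsP; exists x; apply/existsP; exists y; rewrite xy eqxx.
Qed.

Lemma card_edges_at x : #|[set e in edges adj | x \in e]| = deg adj x.
Proof.
rewrite edges_at card_in_imset // => y z _ _ /setP eq_yz.
move: (eq_yz y) (eq_yz z); rewrite !inE !eqxx !orbT.
by case/esym/orP=> /eqP-> //; case/orP=> /eqP.
Qed.

End EdgesAt.

Section ClawedGraph.
Variables (T : finType) (adj : rel T).
Hypotheses (adj_sym : symmetric adj) (deg_le3 : forall v, deg adj v <= 3).

Local Notation CG := (clawed_adj adj).
Local Notation orig v := (inl (inl v) : cg_vertex T).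
Local Notation subv e := (inl (inr e) : cg_vertex T).
Local Notation leaf v i := (inr (v, i) : cg_vertex T).

Lemma clawed_adj_sym : symmetric CG.
Proof. by case=> [[?|?]|[? ?]] [[?|?]|[? ?]]. Qed.

Lemma clawed_neighbours_orig v : [set w | CG (orig v) w] =
  [set subv e | e in [set e in edges adj | v \in e]] :|:
  [set leaf v i | i in [set i : 'I_3 | i < 3 - deg adj v]].
Proof.
apply/setP => -[[u|e]|[u i]]; rewrite !inE /=.
- by apply/esym/norP; split; apply/imsetP => -[].
- rewrite mem_imset => [|? ? [] //]; rewrite [X in _ || X](introF imsetP) => [|[] //].
  by rewrite orbF !inE andbC.
- apply/esym; rewrite [X in X || _](introF imsetP) => [|[] //].
  apply/imsetP/andP => [[j] | [/eqP <-]]; first by rewrite inE => ij [-> ->].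
  by exists i; rewrite ?inE.
Qed.

Lemma deg_clawed_orig v : deg CG (orig v) = 3.
Proof.
rewrite /deg clawed_neighbours_orig cardsU (_ : _ :&: _ = set0) ?cards0 ?subn0.
  rewrite !card_imset => [|? ? [] //|? ? [] //].
  by rewrite card_edges_at // card_ord_lt ?leq_subr // subnKC.
by apply/setP => w; rewrite !inE; apply/andP => -[/imsetP[e _ ->] /imsetP[]].
Qed.

Lemma deg_clawed_subv e : deg CG (subv e) <= 2.
Proof.
case: (boolP (e \in edges adj)) => eE; last first.
  rewrite /deg (_ : [set w | _] = set0) ?cards0 //.
  by apply/setP => -[[u|f]|[u i]]; rewrite !inE //= (negbTE eE) andbF.
apply: leq_trans (_ : #|[set orig u | u in e]| <= 2).
  apply/subset_leq_card/subsetP => -[[u|f]|[u i]]; rewrite !inE //=.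
  by move=> /andP[ue _]; rewrite imset_f.
apply: leq_trans (leq_imset_card _ _) _.
move: eE; rewrite inE => /existsP[a /existsP[b /andP[_ /eqP ->]]].
by rewrite cards2; case: (a != b).
Qed.

Lemma deg_clawed_leaf v i : deg CG (leaf v i) <= 1.
Proof.
apply: (@leq_trans #|[set orig v]|); last by rewrite cards1.
by apply/subset_leq_card/subsetP => -[[u|f]|[u j]]; rewrite !inE //= => /andP[/eqP-> _].
Qed.

Definition claw v : {set {set cg_vertex T}} := [set e in edges CG | orig v \in e].

Lemma card_claw v : #|claw v| = 3.
Proof. by rewrite card_edges_at ?deg_clawed_orig //; apply: clawed_adj_sym. Qed.

Lemma edge_in_claw e : e \in edges CG -> exists v, e \in claw v.
Proof.
move=> eE; suff [v ve] : exists v, orig v \in e by exists v; rewrite inE eE.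
move: eE; rewrite inE => /existsP[x /existsP[y /andP[xy /eqP ->]]].
case: x y xy => [[v|?]|[v ?]] [[w|?]|[w ?]] //= _;
  [exists v | exists v | exists w | exists w]; by rewrite !inE eqxx ?orbT.
Qed.

Lemma claw_uniq u v e : e \in claw u -> e \in claw v -> u = v.
Proof.
rewrite !inE => /andP[+ ue] /andP[_ ve].
case/existsP=> x /existsP[y /andP[xy /eqP ee]]; move: ue ve xy; rewrite ee !inE.
by case/orP=> /eqP<-; case/orP=> /eqP; [case=> ->|move=> <-|move=> <-|case=> ->].
Qed.

Definition claw_edge (p : T * option bool) : {set cg_vertex T} :=
  nth set0 (enum (claw p.1)) (enum_rank p.2).

Lemma claw_edge_rank_lt v (j : option bool) : enum_rank j < size (enum (claw v)).
Proof.
have card3 : #|{: option bool}| = 3 by rewrite card_option card_bool.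
by rewrite -cardE card_claw -card3 ltn_ord.
Qed.

Lemma claw_edge_in v j : claw_edge (v, j) \in claw v.
Proof. by rewrite -mem_enum mem_nth ?claw_edge_rank_lt. Qed.

Lemma claw_edge_inj : injective claw_edge.
Proof.
move=> [u j] [v k] eq_uv.
have uv : u = v.
  by apply: (claw_uniq (claw_edge_in u j)); rewrite eq_uv claw_edge_in.
subst v; congr pair; apply/enum_rank_inj/val_inj/eqP.
rewrite -(nth_uniq set0 (claw_edge_rank_lt u j) (claw_edge_rank_lt u k)) ?enum_uniq //.
exact/eqP.
Qed.

Lemma claw_edges v : claw v = [set claw_edge (v, j) | j : option bool].
Proof.
apply/esym/eqP; rewrite eqEcard card_claw card_imset; last first.
  by move=> j k /(@claw_edge_inj (v, j) (v, k)) [].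
rewrite card_option card_bool andbT.
by apply/subsetP => _ /imsetP[j _ ->]; apply: claw_edge_in.
Qed.

Lemma edges_clawed : edges CG = [set claw_edge p | p in setT].
Proof.
apply/setP => e; apply/idP/imsetP => [/edge_in_claw[v]|[[v j] _ ->]].
  by rewrite claw_edges => /imsetP[j _ ->]; exists (v, j).
by have := claw_edge_in v j; rewrite inE => /andP[].
Qed.

Lemma orig_in_claw_edge v j : orig v \in claw_edge (v, j).
Proof. by have := claw_edge_in v j; rewrite inE => /andP[]. Qed.

Lemma two_matching_clawed F : two_matching CG F =
  (F \subset [set claw_edge p | p in setT]) &&
  [forall v, exists j, claw_edge (v, j) \notin F].
Proof.
rewrite /two_matching -edges_clawed; apply: andb_id2l => FE.
have star_le w : #|[set e in F | w \in e]| <= deg CG w.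
  rewrite -card_edges_at; last exact: clawed_adj_sym.
  by apply/subset_leq_card/subsetP => e /setIdP[/(subsetP FE) eE we]; rewrite inE eE.
apply/forallP/forallP => [star2 v | claw_free [[v|e]|[v i]]].
- apply: contraTT (star2 (orig v)) => /existsPn inF.
  rewrite -ltnNge; apply: (@leq_trans #|claw v|); first by rewrite card_claw.
  rewrite claw_edges; apply/subset_leq_card/subsetP => _ /imsetP[j _ ->].
  by rewrite inE (negbNE (inF j)) orig_in_claw_edge.
- have [j nj] := existsP (claw_free v).
  apply: (@leq_trans #|claw v :\ claw_edge (v, j)|).
    apply/subset_leq_card/subsetP => e /setIdP[eF ve].
    rewrite in_setD1 inE ve (subsetP FE) // !andbT.
    by apply: contraNneq _ nj => <-.
  have := cardsD1 (claw_edge (v, j)) (claw v).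
  by rewrite claw_edge_in card_claw => -[]; rewrite add0n => <-.
- exact: leq_trans (star_le _) (deg_clawed_subv e).
- exact: leq_trans (star_le _) (leq_trans (deg_clawed_leaf v i) _).
Qed.

End ClawedGraph.

Lemma path_adj_sym n : symmetric (@path_adj n).
Proof. by move=> i j; rewrite /path_adj orbC. Qed.

Lemma deg_path_adj n v : deg (@path_adj n) v <= 2.
Proof.
apply: (@leq_trans #|[set inord v.+1; inord v.-1] : {set 'I_n.+1}|); last first.
  by rewrite cards2; case: (_ != _).
apply/subset_leq_card/subsetP => w; rewrite !inE /path_adj.
by case/orP=> /eqP vw; rewrite -[w]inord_val -vw /= eqxx ?orbT.
Qed.

Local Open Scope ring_scope.

Section RealContinuity.
Variables (R : realType) (I : finType) (A : (I -> R) -> Prop).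

Definition rcont_on (h : (I -> R) -> R) : Prop :=
  forall x, A x -> forall e : R, 0 < e -> exists2 d : R, 0 < d &
    forall y, A y -> vdist x y < d -> `|h x - h y| < e.

Lemma rcont_on_eq f g : f =1 g -> rcont_on f -> rcont_on g.
Proof.
move=> fg cf x Ax e e0; have [d d0 H] := cf x Ax e e0.
by exists d => // y Ay xy; rewrite -!fg; apply: H.
Qed.

Lemma rcont_on_cst c : rcont_on (fun _ => c).
Proof. by move=> x _ e e0; exists 1 => // y _ _; rewrite subrr normr0. Qed.

Lemma rcont_on_coord i : rcont_on (fun x => x i).
Proof.
move=> x _ e e0; exists e => // y _; apply: le_lt_trans.
by rewrite /vdist (bigD1 i) //= lerDl sumr_ge0.
Qed.

Lemma rcont_onD f g : rcont_on f -> rcont_on g -> rcont_on (fun x => f x + g x).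
Proof.
move=> cf cg x Ax e e0.
have e2 : 0 < e / 2 by lra.
have [d1 d10 H1] := cf x Ax _ e2; have [d2 d20 H2] := cg x Ax _ e2.
exists (Num.min d1 d2) => [|y Ay]; first by rewrite lt_min d10.
rewrite lt_min => /andP[/(H1 y Ay) lt1 /(H2 y Ay) lt2].
rewrite opprD addrACA (le_lt_trans (ler_normD _ _)) //; lra.
Qed.

Lemma rcont_onN f : rcont_on f -> rcont_on (fun x => - f x).
Proof.
move=> cf x Ax e e0; have [d d0 H] := cf x Ax e e0.
by exists d => // y Ay xy; rewrite -opprD normrN H.
Qed.

Lemma rcont_onB f g : rcont_on f -> rcont_on g -> rcont_on (fun x => f x - g x).
Proof. by move=> cf cg; apply: rcont_onD => //; apply: rcont_onN. Qed.

Lemma rcont_on_norm f : rcont_on f -> rcont_on (fun x => `|f x|).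
Proof.
move=> cf x Ax e e0; have [d d0 H] := cf x Ax e e0.
by exists d => // y Ay xy; rewrite (le_lt_trans (ler_dist_dist _ _)) ?H.
Qed.

Lemma rcont_onM f g : rcont_on f -> rcont_on g -> rcont_on (fun x => f x * g x).
Proof.
move=> cf cg x Ax e e0.
set K := `|f x| + `|g x| + 2.
have K0 : 0 < K by rewrite /K ltr_wpDl ?addr_ge0.
set c := Num.min 1 (e / K).
have c0 : 0 < c by rewrite lt_min ltr01 divr_gt0.
have cK : c * K <= e by rewrite -ler_pdivlMr // ge_min lexx orbT.
have [d1 d10 H1] := cf x Ax c c0; have [d2 d20 H2] := cg x Ax c c0.
exists (Num.min d1 d2) => [|y Ay]; first by rewrite lt_min d10.
rewrite lt_min => /andP[/(H1 y Ay) lt1 /(H2 y Ay) lt2].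
have c1 : c <= 1 by rewrite ge_min lexx.
have fy : `|f y| <= `|f x| + 1.
  by have := ler_normD (f x) (f y - f x); rewrite addrC subrK distrC; lra.
have -> : f x * g x - f y * g y = (f x - f y) * g x + f y * (g x - g y) by ring.
apply: le_lt_trans (ler_normD _ _) _; rewrite !normrM.
have := ler_wpM2r (normr_ge0 (g x)) (ltW lt1).
have : `|f y| * `|g x - g y| <= (`|f x| + 1) * c.
  exact: le_trans (ler_wpM2l (normr_ge0 _) (ltW lt2)) (ler_wpM2r (ltW c0) fy).
rewrite /K in cK; nra.
Qed.

Lemma rcont_onV f : rcont_on f -> (forall x, A x -> f x != 0) ->
  rcont_on (fun x => (f x)^-1).
Proof.
move=> cf f_neq0 x Ax e e0.
have a0 : 0 < `|f x| by rewrite normr_gt0 f_neq0.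
set c := Num.min (`|f x| / 2) (e * `|f x| ^+ 2 / 2).
have c0 : 0 < c by rewrite lt_min !divr_gt0 ?mulr_gt0 ?exprn_gt0.
have [d d0 H] := cf x Ax c c0.
exists d => // y Ay /(H y Ay); rewrite lt_min => /andP[lt1 lt2].
have fy : `|f x| / 2 <= `|f y|.
  by have := ler_normD (f x - f y) (f y); rewrite subrK; lra.
have fy0 : f y != 0 by rewrite -normr_gt0; lra.
have -> : (f x)^-1 - (f y)^-1 = (f y - f x) / (f x * f y).
  by field; rewrite fy0 f_neq0.
rewrite normrM normfV normrM distrC ltr_pdivrMr ?mulr_gt0 ?normr_gt0 ?f_neq0 //.
have ea : 0 <= e * `|f x| by rewrite mulr_ge0 ?ltW.
apply: lt_le_trans lt2 _; rewrite expr2; nra.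
Qed.

Lemma rcont_on_sqrt f : rcont_on f -> (forall x, A x -> 0 < f x) ->
  rcont_on (fun x => Num.sqrt (f x)).
Proof.
move=> cf f_gt0 x Ax e e0.
have sx : 0 < Num.sqrt (f x) by rewrite sqrtr_gt0 f_gt0.
have [d d0 H] := cf x Ax _ (mulr_gt0 e0 sx).
exists d => // y Ay /(H y Ay).
have sy : 0 <= Num.sqrt (f y) by rewrite sqrtr_ge0.
have <- : `|Num.sqrt (f x) - Num.sqrt (f y)| * (Num.sqrt (f x) + Num.sqrt (f y))
    = `|f x - f y|.
  have := subr_sqr (Num.sqrt (f x)) (Num.sqrt (f y)).
  rewrite !sqr_sqrtr ?ltW ?f_gt0 // => ->.
  by rewrite normrM [X in _ = _ * X]ger0_norm // addr_ge0 ?sqrtr_ge0.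
have := normr_ge0 (Num.sqrt (f x) - Num.sqrt (f y)); nra.
Qed.

Lemma rcont_on_min f g : rcont_on f -> rcont_on g ->
  rcont_on (fun x => Num.min (f x) (g x)).
Proof.
move=> cf cg.
apply: (@rcont_on_eq (fun x => (f x + g x - `|f x - g x|) / 2)) => [x|].
  by rewrite minr_absE.
apply: rcont_onM (rcont_on_cst _).
by apply/rcont_onB/rcont_on_norm/rcont_onB => //; apply: rcont_onD.
Qed.

Lemma rcont_on_sum (J : finType) (F : J -> (I -> R) -> R) :
  (forall j, rcont_on (F j)) -> rcont_on (fun x => \sum_j F j x).
Proof.
move=> cF; elim: (index_enum J) => [|j s IH].
  by apply: rcont_on_eq (rcont_on_cst 0) => x; rewrite big_nil.
by apply: rcont_on_eq (rcont_onD (cF j) IH) => x; rewrite big_cons.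
Qed.

Lemma cont_on_coords (J : finType) (f : (I -> R) -> J -> R) :
  (forall j, rcont_on (fun x => f x j)) -> cont_on A f.
Proof.
move=> cf x Ax e e0.
have : rcont_on (fun y => vdist (f x) (f y)).
  by apply: rcont_on_sum => j; apply/rcont_on_norm/rcont_onB => //; apply: rcont_on_cst.
move=> /(_ x Ax e e0)[d d0 H]; exists d => // y Ay /(H y Ay).
have -> : vdist (f x) (f x) = 0 by rewrite /vdist big1 // => j _; rewrite subrr normr0.
by rewrite sub0r normrN ger0_norm // sumr_ge0.
Qed.

End RealContinuity.

Lemma homotopic_id_on (R : realType) (I : finType) (A : (I -> R) -> Prop)
    (h : (I -> R) -> I -> R) :
  maps_into A A h -> (forall x, A x -> h x =1 x) -> homotopic A A h id.
Proof.
(* [H t] is the identity on [A]; the test on [t] only makes [H 0 = h] hold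
   as an equality of functions. *)
move=> hA hx; exists (fun t x => if t == 0 then h x else x); split.
- by move=> t x _ Ax; case: eqP => _ //; apply: hA.
- move=> t x _ Ax e e0; exists e => // s y _ Ay _ xy.
  have hE t' z i : A z -> (if t' == 0 then h z else z) i = z i.
    by move=> Az; case: eqP => _ //; apply: hx.
  by rewrite /vdist (eq_bigr (fun i => `|x i - y i|)) // => i _; rewrite !hE.
- by move=> x _; rewrite eqxx.
- by move=> x _; rewrite oner_eq0.
Qed.

Lemma homeo_homotopy_equiv (R : realType) (I J : finType)
    (A : (I -> R) -> Prop) (B : (J -> R) -> Prop)
    (f : (I -> R) -> J -> R) (g : (J -> R) -> I -> R) :
  cont_on A f -> maps_into A B f -> cont_on B g -> maps_into B A g ->
  (forall x, A x -> g (f x) =1 x) -> (forall y, B y -> f (g y) =1 y) ->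
  homotopy_equiv A B.
Proof.
move=> cf fAB cg gBA gf fg; exists f, g; split=> //.
  by apply: homotopic_id_on => // x Ax; apply/gBA/fAB.
by apply: homotopic_id_on => // y By; apply/fAB/gBA.
Qed.

Section Barycentric.
Variable R : realDomainType.
Implicit Types (a : bool -> R) (u : option bool -> R).

Definition bary a (j : option bool) : R :=
  (if j is Some k then a k else 0) - Num.min (Num.min (a false) (a true)) 0.

Lemma bary_ge0 a j : 0 <= bary a j.
Proof. by rewrite subr_ge0; case: j => [[]|]; rewrite !ge_min lexx ?orbT. Qed.

Lemma bary_has0 a : exists j, bary a j = 0.
Proof.
rewrite /bary; case: (leP (a false) (a true)) => _;
  [case: (leP (a false) 0) | case: (leP (a true) 0)] => _;
  [exists (Some false) | exists None | exists (Some true) | exists None];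
  by rewrite subrr.
Qed.

Lemma bary_sub a k : bary a (Some k) - bary a None = a k.
Proof. by rewrite /bary sub0r opprK subrK. Qed.

Lemma ler_norm_sum_bary a k : `|a k| <= \sum_j bary a j.
Proof.
rewrite (bigD1 (Some k)) //= (bigD1 None) //= addrA -(bary_sub a k).
have := bary_ge0 a (Some k); have := bary_ge0 a None.
have : 0 <= \sum_(j | (j != Some k) && (j != None)) bary a j.
  by apply: sumr_ge0 => j _; apply: bary_ge0.
by case: (ger0P (bary a (Some k) - bary a None)) => _; lra.
Qed.

Lemma bary_diff u a : (forall j, 0 <= u j) -> (exists j, u j = 0) ->
  (forall k, a k = u (Some k) - u None) -> bary a =1 u.
Proof.
move=> u_ge0 [j0 u0] aE j.
have := u_ge0 None; have := u_ge0 (Some false); have := u_ge0 (Some true).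
rewrite /bary; case: j => [k|]; rewrite !aE.
all: case: (leP (u (Some false) - u None) (u (Some true) - u None)) => ?;
  [case: (leP (u (Some false) - u None) 0) | case: (leP (u (Some true) - u None) 0)] => ?.
all: by case: j0 u0 => [[]|] u0; try case: k; lra.
Qed.

End Barycentric.

Section ExtendByZero.
Variables (R : nmodType) (P V : finType) (E : P -> V).
Hypothesis E_inj : injective E.

Definition ext0 (h : P -> R) (e : V) : R :=
  if [pick p | E p == e] is Some p then h p else 0.

Lemma ext0E h p : ext0 h (E p) = h p.
Proof. by rewrite /ext0; case: pickP => [q /eqP/E_inj -> //|/(_ p)]; rewrite eqxx. Qed.

Lemma ext0_out h e : e \notin E @: setT -> ext0 h e = 0.
Proof.
by rewrite /ext0; case: pickP => // p /eqP <-; rewrite imset_f ?inE.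
Qed.

Lemma sum_range (h : V -> R) : (forall e, e \notin E @: setT -> h e = 0) ->
  \sum_e h e = \sum_p h (E p).
Proof.
move=> h0; rewrite (bigID (mem (E @: setT))) /= [X in _ + X]big1 ?addr0.
  by rewrite big_imset => [|p q _ _ /E_inj //]; apply: eq_bigl => p; rewrite inE.
by move=> e /h0.
Qed.

End ExtendByZero.

Section JoinOfCircles.
Variables (R : realType) (T V J : finType) (E : T * option bool -> V).
Variables (pos : J -> T * bool) (ix : T * bool -> J) (face : {set V} -> bool).
Hypotheses (E_inj : injective E) (posK : cancel pos ix) (ixK : cancel ix pos).
Hypothesis faceE : forall F,
  face F = (F \subset E @: setT) && [forall v, exists j, E (v, j) \notin F].

Local Notation X := (@realization R V face).
Local Notation S := (fun y : J -> R => \sum_j y j ^+ 2 = 1).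

Lemma realization_out x e : X x -> e \notin E @: setT -> x e = 0.
Proof.
case=> _ _; rewrite faceE => /andP[/subsetP supp _].
by apply: contraNeq => xe; apply: supp; rewrite inE.
Qed.

Lemma realization_claw0 x v : X x -> exists j, x (E (v, j)) = 0.
Proof.
case=> _ _; rewrite faceE => /andP[_ /forallP/(_ v)/existsP[j]].
by rewrite inE negbK => /eqP; exists j.
Qed.

Lemma realization_sum x : X x -> \sum_p x (E p) = 1.
Proof.
move=> Xx; case: (Xx) => _ <- _.
by rewrite (sum_range E_inj) // => e /realization_out->.
Qed.

Definition circ (x : V -> R) (p : T * bool) : R :=
  x (E (p.1, Some p.2)) - x (E (p.1, None)).
Definition radius (x : V -> R) : R := Num.sqrt (\sum_j circ x (pos j) ^+ 2).
Definition to_sphere (x : V -> R) (j : J) : R := circ x (pos j) / radius x.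

Definition coef (y : J -> R) (p : T * option bool) : R :=
  bary (fun k => y (ix (p.1, k))) p.2.
Definition mass (y : J -> R) : R := \sum_p coef y p.
Definition of_sphere (y : J -> R) : V -> R := ext0 E (fun p => coef y p / mass y).

Lemma radius_gt0 x : X x -> 0 < radius x.
Proof.
move=> Xx; have [x_ge0 _ _] := Xx.
have [[v j] /andP[_ xvj]] : exists p, true && (0 < x (E p)).
  apply: psumr_neq0P => [p _|]; first exact: x_ge0.
  by rewrite realization_sum //; apply/eqP; rewrite oner_eq0.
have [k ck] : exists k, circ x (v, k) != 0.
  apply/existsP; apply: contraTT xvj => /existsPn circ0.
  have xE j' : x (E (v, j')) = x (E (v, None)).
    by case: j' => [k|] //; apply/eqP; rewrite -subr_eq0; apply/negPn/circ0.
  by have [j0] := realization_claw0 v Xx; rewrite !xE => ->; rewrite ltxx.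
rewrite sqrtr_gt0 (bigD1 (ix (v, k))) //= ixK ltr_wpDr ?exprn_even_gt0 ?ck ?orbT //.
by apply: sumr_ge0 => i _; apply: sqr_ge0.
Qed.

Lemma to_sphere_in x : X x -> S (to_sphere x).
Proof.
move=> Xx; have r0 := radius_gt0 Xx.
under eq_bigr do rewrite expr_div_n.
rewrite -mulr_suml sqr_sqrtr ?mulfV //; first by rewrite gt_eqF // -sqrtr_gt0.
by apply: sumr_ge0 => j _; apply: sqr_ge0.
Qed.

Lemma mass_gt0 y : S y -> 0 < mass y.
Proof.
move=> Sy; have [j /andP[_]] : exists j, true && (0 < y j ^+ 2).
  apply: psumr_neq0P => [j _|]; first exact: sqr_ge0.
  by rewrite Sy; apply/eqP; rewrite oner_eq0.
rewrite exprn_even_gt0 //= -normr_gt0 -[j]posK; case: (pos j) => v k yvk.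
apply: lt_le_trans yvk (le_trans (ler_norm_sum_bary (fun k => y (ix (v, k))) k) _).
rewrite /mass -(pair_big xpredT xpredT (fun v j => coef y (v, j))) /=.
rewrite (bigD1 v) //= ler_wpDr //.
by apply: sumr_ge0 => w _; apply: sumr_ge0 => j' _; apply: bary_ge0.
Qed.

Lemma of_sphere_in y : S y -> X (of_sphere y).
Proof.
move=> Sy; have m0 := mass_gt0 Sy; split.
- move=> e; rewrite /of_sphere /ext0; case: pickP => // p _.
  by rewrite divr_ge0 ?bary_ge0 ?ltW.
- rewrite /of_sphere (sum_range E_inj) => [|e /ext0_out->] //.
  under eq_bigr do rewrite (ext0E E_inj).
  by rewrite -mulr_suml mulfV ?gt_eqF.
- rewrite faceE; apply/andP; split.
    by apply/subsetP => e; rewrite inE /of_sphere; apply: contraR => /ext0_out->.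
  apply/forallP => v; have [j cj] := bary_has0 (fun k => y (ix (v, k))).
  apply/existsP; exists j.
  by rewrite inE negbK /of_sphere (ext0E E_inj) /coef /= cj mul0r.
Qed.

Lemma to_sphereK x : X x -> of_sphere (to_sphere x) =1 x.
Proof.
move=> Xx e; have r0 := radius_gt0 Xx.
have coefE p : coef (to_sphere x) p = x (E p) / radius x.
  case: p => v j; apply: (bary_diff (u := fun j => x (E (v, j)) / radius x)).
  - by move=> j'; apply: divr_ge0 (ltW r0); case: Xx.
  - by have [j0 x0] := realization_claw0 v Xx; exists j0; rewrite x0 mul0r.
  - by move=> k; rewrite /to_sphere ixK -mulrBl.
have massE : mass (to_sphere x) = (radius x)^-1.
  by rewrite /mass (eq_bigr _ (fun p _ => coefE p)) -mulr_suml realization_sum ?mul1r.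
rewrite /of_sphere /ext0; case: pickP => [p /eqP <-|noE].
  by rewrite coefE massE invrK mulfVK ?gt_eqF.
rewrite realization_out //; apply/imsetP => -[p _ ep].
by move: (noE p); rewrite ep eqxx.
Qed.

Lemma of_sphereK y : S y -> to_sphere (of_sphere y) =1 y.
Proof.
move=> Sy j; have m0 := mass_gt0 Sy.
have circE p : circ (of_sphere y) p = y (ix p) / mass y.
  by case: p => v k; rewrite /circ /of_sphere !(ext0E E_inj) -mulrBl /coef /= bary_sub.
have radiusE : radius (of_sphere y) = (mass y)^-1.
  rewrite /radius (eq_bigr (fun j => y j ^+ 2 * (mass y)^-1 ^+ 2)); last first.
    by move=> i _; rewrite circE posK exprMn.
  by rewrite -mulr_suml Sy mul1r sqrtr_sqr ger0_norm // invr_ge0 ltW.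
by rewrite /to_sphere circE posK radiusE invrK divfK ?gt_eqF.
Qed.

Lemma circ_cont p : rcont_on X (fun x => circ x p).
Proof. by apply: rcont_onB; apply: rcont_on_coord. Qed.

Lemma to_sphere_cont : cont_on X to_sphere.
Proof.
apply: cont_on_coords => j; apply: rcont_onM (circ_cont _) _.
apply: rcont_onV => [|x /radius_gt0/gt_eqF->//].
apply: rcont_on_sqrt => [|x]; last by rewrite -sqrtr_gt0; apply: radius_gt0.
by apply: rcont_on_sum => i; apply: rcont_onM; apply: circ_cont.
Qed.

Lemma coef_cont p : rcont_on S (fun y => coef y p).
Proof.
have min_cont : rcont_on S
    (fun y => Num.min (Num.min (y (ix (p.1, false))) (y (ix (p.1, true)))) 0).
  by apply: rcont_on_min; [apply: rcont_on_min; apply: rcont_on_coord | apply: rcont_on_cst].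
by case: p min_cont => v [k|] /= mc; apply: (rcont_onB _ mc);
  [apply: rcont_on_coord | apply: rcont_on_cst].
Qed.

Lemma of_sphere_cont : cont_on S of_sphere.
Proof.
apply: cont_on_coords => e; rewrite /of_sphere /ext0.
case: pickP => [p _|_]; last exact: rcont_on_cst.
apply: rcont_onM (coef_cont p) (rcont_onV (rcont_on_sum coef_cont) _).
by move=> y /mass_gt0/gt_eqF->.
Qed.

Lemma join_circles_homotopy_equiv : homotopy_equiv X S.
Proof.
apply: (homeo_homotopy_equiv to_sphere_cont _ of_sphere_cont).
- exact: to_sphere_in.
- exact: of_sphere_in.
- exact: to_sphereK.
- exact: of_sphereK.
Qed.

End JoinOfCircles.

Lemma join_circles_sphere (R : realType) (T V : finType) (m : nat)
    (E : T * option bool -> V) (face : {set V} -> bool) :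
  injective E ->
  (forall F,
     face F = (F \subset E @: setT) && [forall v, exists j, E (v, j) \notin F]) ->
  (2 * #|T| = m.+1)%N ->
  homotopy_equiv (@realization R V face) (@sphere R m).
Proof.
move=> E_inj faceE cardT.
have cardJ : m.+1 = #|{: T * bool}| by rewrite card_prod card_bool mulnC.
pose pos (i : 'I_m.+1) := enum_val (cast_ord cardJ i).
pose ix (p : T * bool) := cast_ord (esym cardJ) (enum_rank p).
apply: (@join_circles_homotopy_equiv R T V _ E pos ix) => //.
  by move=> i; rewrite /ix /pos enum_valK cast_ordK.
by move=> p; rewrite /ix /pos cast_ordKV enum_rankK.
Qed.

Theorem mainTheorem10 (R : realType) (n : nat) :
  homotopy_equiv (@realization R _ (M2 (@CP_adj n))) (@sphere R (2 * n + 1)).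
Proof.
have deg_le3 v : (deg (@path_adj n) v <= 3)%N.
  exact: leq_trans (deg_path_adj v) (leqnSn 2).
apply: (@join_circles_sphere _ _ _ _ (claw_edge (@path_adj n))).
- exact: claw_edge_inj (@path_adj_sym n) deg_le3.
- exact: two_matching_clawed (@path_adj_sym n) deg_le3.
- by rewrite card_ord; lia.
Qed.
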